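(* Let $1\le D\le K-1$ and let $\mathbf{L}$ be the $(K,D)$ AIR matrix. Let $\mathbf{L}(j,k)=1$ with the entry $(j,k)$ lying in the even submatrix $\mathbf{I}_{\lambda_{2i}\times\beta_{2i}\lambda_{2i}}$, and let $j_R=j-(K-\lambda_{2i})$ and $k_R=k-(K-D-\lambda_{2i-1})$ be its row and column offsets within that submatrix. (1) If $i\in[0:\lfloor l/2\rfloor]$ and $k_R\in[0:(\beta_{2i}-1)\lambda_{2i}-1]$, then $d_{right}(j,k)=\lambda_{2i}$. (2) If $i\in[0:\lfloor l/2\rfloor-1]$, $k_R\in[(\beta_{2i}-1)\lambda_{2i}:\beta_{2i}\lambda_{2i}-1]$, and $j_R=c\lambda_{2i+1}+d$ with integers $c\ge0$, $0\le d<\lambda_{2i+1}$, then $d_{right}(j,k)=\lambda_{2i}-c\lambda_{2i+1}$.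
   Context: Notation: $[a:b]=\{a,\dots,b\}$. Let $K,D$ be integers with $1\le D\le K-1$. Define $\lambda_{-1}=K-D$, $\lambda_0=D$ and recursively, by Euclidean division, $\lambda_{i-1}=\beta_i\lambda_i+\lambda_{i+1}$ with $0\le\lambda_{i+1}<\lambda_i$, for $i=0,1,2,\dots$, stopping at the index $l\ge0$ with $\lambda_{l+1}=0$; $\beta_0\ge0$ may be $0$, $\beta_i\ge1$ for $i\ge1$. Set $\lambda_j=0$ for $j>l$. For $n\mid m$, $\mathbf{I}_{m\times n}$ is $m/n$ copies of the $n\times n$ identity stacked vertically and $\mathbf{I}_{n\times m}$ its transpose. The $(K,D)$ AIR matrix $\mathbf{L}$ is the $K\times(K-D)$ $0/1$ matrix (rows $[0:K-1]$, columns $[0:K-D-1]$) that is zero except in the blocks: the $(K-D)\times(K-D)$ identity in rows and columns $[0:K-D-1]$; for $0\le 2i\le l$, the even submatrix $\mathbf{I}_{\lambda_{2i}\times\beta_{2i}\lambda_{2i}}$ in rows $[K-\lambda_{2i}:K-1]$, columns $[K-D-\lambda_{2i-1}:K-D-\lambda_{2i+1}-1]$ (absent if $i=0,\beta_0=0$); for $1\le 2i+1\le l$, the odd submatrix $\mathbf{I}_{\beta_{2i+1}\lambda_{2i+1}\times\lambda_{2i+1}}$ in rows $[K-\lambda_{2i}:K-\lambda_{2i+2}-1]$, columns $[K-D-\lambda_{2i+1}:K-D-1]$. Right-distance: for $\mathbf{L}(j,k)=1$ with $(j,k)$ in an even submatrix, let $k'$ be the smallest column index with $k'>k$ and $\mathbf{L}(j,k')=1$;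 then $d_{right}(j,k)=k'-k$. *)

From mathcomp Require Import all_boot all_algebra.
Set Implicit Arguments. Unset Strict Implicit. Unset Printing Implicit Defensive.

(* Euclidean sequence.  lamP K D n = (lambda_{n-1}, lambda_n).
   Once a zero is reached the sequence stays zero (lambda_j = 0 for j > l). *)
Fixpoint lamP (K D : nat) (n : nat) : nat * nat :=
  match n with
  | 0 => (K - D, D)
  | n'.+1 => let: (a, b) := lamP K D n' in (b, if b == 0 then 0 else a %% b)
  end.

(* Shifted lambda:  lam K D m = lambda_{m-1}.  So lambda_{-1} = lam K D 0,
   lambda_0 = lam K D 1, lambda_i = lam K D i.+1. *)
Definition lam (K D m : nat) : nat := (lamP K D m).1.

(* beta_i = floor(lambda_{i-1} / lambda_i), for i >= 0. *)
Definition beta (K D i : nat) : nat := lam K D i %/ lam K D i.+1.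

(* l is the stopping index: lambda_{l+1} = 0 and lambda_j > 0 for 0 <= j <= l. *)
Definition is_stop (K D l : nat) : Prop :=
  lam K D l.+2 = 0 /\ forall j, j <= l -> 0 < lam K D j.+1.

(* Membership of (j,k) in the even submatrix number i (i >= 0):
   I_{lambda_{2i} x beta_{2i} lambda_{2i}} in rows [K-lambda_{2i} : K-1],
   columns [K-D-lambda_{2i-1} : K-D-lambda_{2i+1}-1]; present iff 2i <= l
   and not (i = 0 and beta_0 = 0). *)
Definition in_even_block (K D l i j k : nat) : bool :=
  [&& (i.*2 <= l), ~~ ((i == 0) && (beta K D 0 == 0)),
      K - lam K D (i.*2).+1 <= j < K
    & K - D - lam K D i.*2 <= k < K - D - lam K D (i.*2).+2 ].

(* Entry of the even submatrix (horizontal stack of identities). *)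
Definition even_entry (K D i j k : nat) : bool :=
  let n := lam K D (i.*2).+1 in
  (j - (K - n)) == (k - (K - D - lam K D i.*2)) %% n.

(* Odd submatrix number i (for 1 <= 2i+1 <= l):
   I_{beta_{2i+1} lambda_{2i+1} x lambda_{2i+1}} in rows
   [K-lambda_{2i} : K-lambda_{2i+2}-1], columns [K-D-lambda_{2i+1} : K-D-1]. *)
Definition in_odd_block (K D l i j k : nat) : bool :=
  [&& (i.*2).+1 <= l,
      K - lam K D (i.*2).+1 <= j < K - lam K D (i.*2).+3
    & K - D - lam K D (i.*2).+2 <= k < K - D ].

Definition odd_entry (K D i j k : nat) : bool :=
  let n := lam K D (i.*2).+2 in
  (j - (K - lam K D (i.*2).+1)) %% n == k - (K - D - n).

Definition AIR_entry (K D l j k : nat) : bool :=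
  [|| (j < K - D) && (k == j),
      [exists i : 'I_K.+1, in_even_block K D l i j k && even_entry K D i j k]
    | [exists i : 'I_K.+1, in_odd_block K D l i j k && odd_entry K D i j k] ].

Definition AIR (K D l : nat) : 'M[nat]_(K, K - D) :=
  \matrix_(j < K, k < K - D) (AIR_entry K D l j k : nat).

Definition is_dright (m n : nat) (L : 'M[nat]_(m, n)) (j : 'I_m) (k : 'I_n)
    (d : nat) : Prop :=
  0 < d /\
  (exists k' : 'I_n, nat_of_ord k' = k + d /\ L j k' = 1%N) /\
  (forall k'' : 'I_n, k < k'' < k + d -> L j k'' = 0%N).

From mathcomp Require Import all_boot all_algebra zify.

Set Implicit Arguments.
Unset Strict Implicit.
Unset Printing Implicit Defensive.

(* Write b = lambda_{2i} and e = lambda_{2i+1}.  Row j of the even block i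
   meets it in beta_{2i} side-by-side copies of I_b, so its ones lie at the
   column offsets congruent to the row offset jR modulo b; this gives (1).  In
   case (2) the one at column k is the last one of the block, and the next one
   lies among the last e columns, at offset d: if jR = c e + d with
   c < beta_{2i+1}, row j crosses the odd block i, whose ones sit at offset
   jR mod e = d; otherwise jR < b forces c = beta_{2i+1}, and row j crosses the
   even block i+1 at row offset d.  Only 2i <= l (from block membership) and
   2i+2 <= l (in case (2)) are needed, not is_stop or the bounds on D. *)

Section Euclid.
Variables K D : nat.

Lemma lamSS n : lam K D n.+2 =
  if lam K D n.+1 == 0 then 0 else lam K D n %% lam K D n.+1.
Proof. by rewrite /lam /=; case: (lamP K D n). Qed.

Lemma lam_leS n : lam K D n.+2 <= lam K D n.+1.
Proof. by rewrite lamSS; case: eqP => // /eqP; rewrite -lt0n => /ltn_pmod/ltnW. Qed.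

Lemma lam_ltS n : 0 < lam K D n.+1 -> lam K D n.+2 < lam K D n.+1.
Proof. by move=> lam_gt0; rewrite lamSS gtn_eqF // ltn_pmod. Qed.

Lemma lam_divn n : 0 < lam K D n.+1 ->
  lam K D n = beta K D n * lam K D n.+1 + lam K D n.+2.
Proof. by move=> lam_gt0; rewrite lamSS gtn_eqF // -divn_eq. Qed.

Lemma lam_antitone m n : 0 < m -> m <= n -> lam K D n <= lam K D m.
Proof.
case: m => // m _; elim: n => // n IHn; rewrite leq_eqVlt ltnS => /orP[/eqP-> //|].
by case: n IHn => // n IHn /IHn; apply: leq_trans; apply: lam_leS.
Qed.

Lemma lam_le_D n : lam K D n.+1 <= D.
Proof. exact: (@lam_antitone 1). Qed.

(* lambda_{-1} = K - D may be smaller than lambda_0 = D, but lambda_1 is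
   already a remainder modulo D. *)
Lemma lam_double_le i : lam K D i.*2 <= K - D.
Proof.
case: i => [|i] //; rewrite doubleS.
have lam2_le : lam K D 2 <= K - D by rewrite lamSS; case: eqP => // _; apply: leq_mod.
by apply: leq_trans lam2_le; apply: lam_antitone.
Qed.

Lemma index_add_lam_le_D n : 0 < lam K D n.+1 -> n + lam K D n.+1 <= D.
Proof.
elim: n => [|n IHn] lam_gt0; first by rewrite /lam.
have lt_lam := lam_ltS (leq_trans lam_gt0 (lam_leS n)).
by have := IHn (leq_trans lam_gt0 (lam_leS n)); lia.
Qed.

End Euclid.

Section BlockGeometry.
Variables K D l : nat.

Lemma even_block_lam_gt0 i j k :
  in_even_block K D l i j k -> 0 < lam K D (i.*2).+1.
Proof. by case/and4P=> _ _ /andP[lej ltj] _; lia. Qed.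

Lemma odd_block_lam_gt0 i j k :
  in_odd_block K D l i j k -> 0 < lam K D (i.*2).+1.
Proof. by case/and3P=> _ /andP[lej ltj] _; lia. Qed.

Lemma even_block_index_lt i j k : in_even_block K D l i j k -> i < K.
Proof.
move=> blk; have /index_add_lam_le_D := even_block_lam_gt0 blk.
by case/and4P: blk => _ _ _ /andP[_ ltk]; lia.
Qed.

Lemma odd_block_index_lt i j k : in_odd_block K D l i j k -> i < K.
Proof.
move=> blk; have /index_add_lam_le_D := odd_block_lam_gt0 blk.
by case/and3P: blk => _ _ /andP[_ ltk]; lia.
Qed.

Lemma even_block_cols_lt i i' j j' k k' : i < i' ->
  in_even_block K D l i j k -> in_even_block K D l i' j' k' -> k < k'.
Proof.
move=> lt_ii' /and4P[_ _ _ /andP[_ ltk]] /and4P[_ _ _ /andP[lek' _]].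
have : lam K D i'.*2 <= lam K D (i.*2).+2.
  by apply: lam_antitone; rewrite // -doubleS leq_double.
by lia.
Qed.

Lemma odd_block_rows_lt i i' j j' k k' : i < i' ->
  in_odd_block K D l i j k -> in_odd_block K D l i' j' k' -> j < j'.
Proof.
move=> lt_ii' /and3P[_ /andP[_ ltj] _] /and3P[_ /andP[lej' _] _].
have : lam K D (i'.*2).+1 <= lam K D (i.*2).+3.
  by apply: lam_antitone; rewrite // !ltnS -doubleS leq_double.
by lia.
Qed.

Lemma even_odd_block_disjoint i i' j k :
  in_even_block K D l i j k -> ~~ in_odd_block K D l i' j k.
Proof.
case/and4P=> _ _ /andP[lej _] /andP[_ ltk].
apply/negP => /and3P[_ /andP[_ ltj] /andP[lek _]].
have [lt_i'i | le_ii'] := ltnP i' i.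
  have : lam K D (i.*2).+1 <= lam K D (i'.*2).+3.
    by apply: lam_antitone; rewrite // !ltnS -doubleS leq_double.
  by lia.
have : lam K D (i'.*2).+2 <= lam K D (i.*2).+2.
  by apply: lam_antitone; rewrite // !ltnS leq_double.
by lia.
Qed.

Lemma existsb_ord_uniq n (P Q : pred nat) i0 :
  i0 < n -> P i0 -> (forall i, P i -> i = i0) ->
  [exists i : 'I_n, P i && Q i] = Q i0.
Proof.
move=> lt_i0n Pi0 P_uniq; apply/existsP/idP => [[i /andP[/P_uniq <-]] //|Qi0].
by exists (Ordinal lt_i0n); rewrite Pi0.
Qed.

Lemma AIR_entry_even i j k :
  in_even_block K D l i j k -> AIR_entry K D l j k = even_entry K D i j k.
Proof.
move=> blk; rewrite /AIR_entry.
have [_ _ /andP[lej _] _] := and4P blk.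
have -> /= : j < K - D = false by have := lam_le_D K D i.*2; lia.
have -> : [exists i' : 'I_K.+1,
             in_odd_block K D l i' j k && odd_entry K D i' j k] = false.
  apply/negbTE/existsP => -[i' /andP[odd_blk _]].
  by move: odd_blk; apply/negP; apply: even_odd_block_disjoint blk.
rewrite orbF (@existsb_ord_uniq _ (fun i => in_even_block K D l i j k)
                                 (fun i => even_entry K D i j k) i) //.
- by rewrite ltnS ltnW // (even_block_index_lt blk).
- move=> i' blk'; case: (ltngtP i' i) => // lt_ii.
    by have := even_block_cols_lt lt_ii blk' blk; rewrite ltnn.
  by have := even_block_cols_lt lt_ii blk blk'; rewrite ltnn.
Qed.

Lemma AIR_entry_odd i j k :
  in_odd_block K D l i j k -> AIR_entry K D l j k = odd_entry K D i j k.
Proof.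
move=> blk; rewrite /AIR_entry.
have [_ /andP[lej _] _] := and3P blk.
have -> : j < K - D = false by have := lam_le_D K D i.*2; lia.
have -> /= : [exists i' : 'I_K.+1,
                in_even_block K D l i' j k && even_entry K D i' j k] = false.
  apply/negbTE/existsP => -[i' /andP[even_blk _]].
  by move: blk; apply/negP; apply: even_odd_block_disjoint even_blk.
rewrite (@existsb_ord_uniq _ (fun i => in_odd_block K D l i j k)
                            (fun i => odd_entry K D i j k) i) //.
- by rewrite ltnS ltnW // (odd_block_index_lt blk).
- move=> i' blk'; case: (ltngtP i' i) => // lt_ii.
    by have := odd_block_rows_lt lt_ii blk' blk; rewrite ltnn.
  by have := odd_block_rows_lt lt_ii blk blk'; rewrite ltnn.
Qed.

End BlockGeometry.

Lemma is_drightP m n (L : 'M[nat]_(m, n)) (j : 'I_m) (k : 'I_n) (f : pred nat) d :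
  (forall x : 'I_n, L j x = f x) -> 0 < d -> k + d < n -> f (k + d) ->
  (forall x, k < x < k + d -> ~~ f x) -> is_dright L j k d.
Proof.
move=> Lf d_gt0 lt_kd_n f_kd f0; split=> //; split.
  by exists (Ordinal lt_kd_n); rewrite Lf f_kd.
by move=> x /f0 /negbTE f0x; rewrite Lf f0x.
Qed.

Lemma modnD_neq x t n : 0 < t < n -> (x + t) %% n != x %% n.
Proof.
case/andP=> t_gt0 lt_tn; rewrite eqn_mod_dvd ?leq_addr // addKn.
by apply: contraTN lt_tn => /(dvdn_leq t_gt0); rewrite -leqNgt.
Qed.

Section EvenBlockRow.
Variables (K D l i : nat) (j : 'I_K) (k : 'I_(K - D)).
Hypotheses (blk : in_even_block K D l i j k) (one_jk : AIR K D l j k = 1).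

Local Notation a := (lam K D i.*2).
Local Notation b := (lam K D (i.*2).+1).
Local Notation e := (lam K D (i.*2).+2).
Local Notation f := (lam K D (i.*2).+3).
Local Notation jR := (j - (K - b)).
Local Notation kR := (k - (K - D - a)).

Let b_gt0 : 0 < b := even_block_lam_gt0 blk.
Let a_eq : a = beta K D i.*2 * b + e := lam_divn b_gt0.
Let a_le : a <= K - D := lam_double_le K D i.
Let e_le : e <= K - D.
Proof. by have := lam_double_le K D i.+1; rewrite doubleS. Qed.
Let b_le_K : b <= K.
Proof. by have := lam_le_D K D i.*2; have := ltn_ord k; lia. Qed.

Lemma even_row_entry x : K - D - a <= x < K - D - e ->
  AIR_entry K D l j x = (jR == (x - (K - D - a)) %% b).
Proof.
move=> colx; rewrite (@AIR_entry_even _ _ _ i) //.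
by move: blk; rewrite /in_even_block colx => /and4P[-> -> -> _].
Qed.

Lemma even_row_offset : jR = kR %% b.
Proof.
apply/eqP; rewrite -even_row_entry; last by case/and4P: blk.
by move: one_jk; rewrite mxE; case: AIR_entry.
Qed.

Lemma even_row_zero x : k < x < k + b -> x < K - D - e -> ~~ AIR_entry K D l j x.
Proof.
case/andP=> lt_kx lt_x_kb lt_x_end; have [_ _ _ /andP[lek _]] := and4P blk.
rewrite even_row_entry ?lt_x_end ?(leq_trans lek (ltnW lt_kx)) // even_row_offset eq_sym.
have -> : x - (K - D - a) = kR + (x - k) by lia.
by apply: modnD_neq; lia.
Qed.

Lemma even_row_dright_inner :
  kR < (beta K D i.*2 - 1) * b -> is_dright (AIR K D l) j k b.
Proof.
rewrite mulnBl mul1n => lt_kR; have [_ _ _ /andP[lek _]] := and4P blk.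
have lt_kb_end : k + b < K - D - e by lia.
apply: (is_drightP (f := AIR_entry K D l j)) => //.
- by move=> x; rewrite mxE.
- by lia.
- rewrite even_row_entry; last by lia.
  by rewrite even_row_offset (_ : k + b - _ = kR + b) ?modnDr //; lia.
- by move=> x /andP[lt_kx lt_x_kb]; apply: even_row_zero; lia.
Qed.

Lemma even_row_tail_odd c d y : (i.*2).+1 <= l ->
  jR = c * e + d -> d < e -> c < beta K D (i.*2).+1 -> y <= d ->
  AIR_entry K D l j (K - D - e + y) = (y == d).
Proof.
move=> le_l jR_eq lt_de lt_c le_yd.
have e_gt0 : 0 < e by lia.
have b_eq := lam_divn e_gt0.
have : c.+1 * e <= beta K D (i.*2).+1 * e by rewrite leq_mul2r lt_c orbT.
rewrite mulSn => le_ce.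
have [_ _ /andP[lej _] _] := and4P blk.
rewrite (@AIR_entry_odd _ _ _ i).
  by rewrite /odd_entry jR_eq modnMDl modn_small // addKn eq_sym.
by rewrite /in_odd_block le_l lej /=; apply/andP; split; lia.
Qed.

Lemma even_row_tail_even c d y : (i.+1).*2 <= l ->
  jR = c * e + d -> d < e -> beta K D (i.*2).+1 <= c -> y <= d ->
  AIR_entry K D l j (K - D - e + y) = (y == d).
Proof.
rewrite doubleS => le_l jR_eq lt_de le_c le_yd.
have e_gt0 : 0 < e by lia.
have b_eq := lam_divn e_gt0.
have lt_jR : jR < b by rewrite even_row_offset ltn_mod.
have f_le := lam_leS K D (i.*2).+1.
have lt_c : c < (beta K D (i.*2).+1).+1.
  by rewrite -(ltn_pmul2r e_gt0) mulSn; lia.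
have c_eq : c = beta K D (i.*2).+1 by apply/eqP; rewrite eqn_leq le_c -ltnS lt_c.
have f_gt0 : 0 < f by lia.
have e_eq := lam_divn f_gt0.
have : 0 < beta K D (i.*2).+2 by rewrite divn_gt0.
rewrite -(leq_pmul2r f_gt0) mul1n => le_f.
have [_ _ /andP[lej ltj] _] := and4P blk.
rewrite (@AIR_entry_even _ _ _ i.+1).
  rewrite /even_entry !doubleS addKn modn_small; last by lia.
  have -> : j - (K - f) = d by lia.
  by rewrite eq_sym.
by rewrite /in_even_block !doubleS le_l ltj /=; apply/andP; split; lia.
Qed.

Lemma even_row_dright_last c d : (i.+1).*2 <= l ->
  (beta K D i.*2 - 1) * b <= kR < beta K D i.*2 * b ->
  jR = c * e + d -> d < e -> is_dright (AIR K D l) j k (b - c * e).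
Proof.
move=> le_l /andP[ge_kR lt_kR] jR_eq lt_de.
have [_ _ _ /andP[lek _]] := and4P blk.
have jR_r : jR = kR - (beta K D i.*2 - 1) * b.
  rewrite even_row_offset -{1}(subnKC ge_kR) modnMDl modn_small //.
  by move: ge_kR lt_kR; rewrite mulnBl mul1n; lia.
have beta_gt0 : 0 < beta K D i.*2 by move: lt_kR; case: beta.
have le_b := leq_pmull b beta_gt0.
rewrite mulnBl mul1n in ge_kR jR_r.
have next_eq : k + (b - c * e) = K - D - e + d by lia.
have tail y : y <= d -> AIR_entry K D l j (K - D - e + y) = (y == d).
  have [lt_c|le_c] := ltnP c (beta K D (i.*2).+1).
    by apply: even_row_tail_odd lt_c; rewrite // ltnW // -doubleS.
  exact: even_row_tail_even le_l jR_eq lt_de le_c.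
apply: (is_drightP (f := AIR_entry K D l j)).
- by move=> x; rewrite mxE.
- by lia.
- by rewrite next_eq; lia.
- by rewrite next_eq tail ?eqxx.
- move=> x /andP[lt_kx]; rewrite next_eq => lt_x_next.
  have [lt_x_end|ge_x_end] := ltnP x (K - D - e).
    by apply: even_row_zero => //; lia.
  by rewrite -(subnKC ge_x_end) tail; lia.
Qed.

End EvenBlockRow.

Theorem lemma3 (K D l : nat) (hD1 : 1 <= D) (hDK : D <= K - 1)
    (hl : is_stop K D l)
    (i : nat) (j : 'I_K) (k : 'I_(K - D))
    (hblk : in_even_block K D l i j k)
    (h1 : AIR K D l j k = 1%N) :
  let jR := j - (K - lam K D (i.*2).+1) in
  let kR := k - (K - D - lam K D i.*2) in
  (i <= l./2 ->
     kR < (beta K D i.*2 - 1) * lam K D (i.*2).+1 ->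
     is_dright (AIR K D l) j k (lam K D (i.*2).+1)) /\
  (forall c d : nat, i.+1 <= l./2 ->
     (beta K D i.*2 - 1) * lam K D (i.*2).+1 <= kR <
       beta K D i.*2 * lam K D (i.*2).+1 ->
     jR = c * lam K D (i.*2).+2 + d -> d < lam K D (i.*2).+2 ->
     is_dright (AIR K D l) j k (lam K D (i.*2).+1 - c * lam K D (i.*2).+2)).
Proof.
move=> jR kR; split; first by move=> _; apply: even_row_dright_inner.
move=> c d le_i_half; apply: even_row_dright_last => //.
rewrite -leq_double in le_i_half; apply: leq_trans le_i_half _.
by rewrite -{2}(odd_double_half l) leq_addl.
Qed.
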